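(* Almost all graphs $G$ have a $\chi_{harm}$-mate; i.e. the harmonious polynomial $\chi_{harm}$ is weakly distinguishing.
   Context: All graphs are finite and simple. For $k\in\mathbb{N}$, a harmonious colouring of $G$ with $k$ colours is a map $f:V(G)\to[k]$ that is a proper colouring and such that for all $i,j\in[k]$ the induced subgraph $G[f^{-1}(i)\cup f^{-1}(j)]$ has at most one edge. $\chi_{harm}(G;\lambda)$ denotes the number of harmonious colourings of $G$ with $\lambda$ colours; it is a polynomial in $\lambda$. For a graph polynomial $P$, $H$ is a $P$-mate of $G$ if $P(G)=P(H)$ but $H\not\cong G$; $G$ is $P$-unique if it has no $P$-mate. Let $\mathcal{G}(n)$ be the set of isomorphism classes of graphs on $n$ vertices and $U_P(n)$ the set of $P$-unique graphs in $\mathcal{G}(n)$; $P$ is weakly distinguishing if $\lim_{n\to\infty}|U_P(n)|/|\mathcal{G}(n)|=0$. *)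

From HB Require Import structures.
From mathcomp Require Import all_boot all_order all_algebra all_fingroup.
From mathcomp Require Import all_classical all_reals all_analysis.
Set Implicit Arguments. Unset Strict Implicit. Unset Printing Implicit Defensive.

Definition graph (n : nat) := {set 'I_n * 'I_n}.

Definition simpleb n (g : graph n) : bool :=
  [forall x, forall y, (((x, y) \in g) == ((y, x) \in g)) && ((x, x) \notin g)].

Definition iso n m (g : graph n) (h : graph m) : Prop :=
  exists f : 'I_n -> 'I_m, bijective f /\
    forall x y, ((f x, f y) \in h) = ((x, y) \in g).

Definition isob n (g h : graph n) : bool :=
  [exists s : {perm 'I_n}, forall x, forall y, ((s x, s y) \in h) == ((x, y) \in g)].

Definition edges n (g : graph n) : {set {set 'I_n}} :=
  [set [set p.1; p.2] | p in g].

Definition harmonious n k (g : graph n) (f : {ffun 'I_n -> 'I_k}) : bool :=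
  [forall x, forall y, ((x, y) \in g) ==> (f x != f y)] &&
  [forall i, forall j,
     #|[set e in edges g | e \subset [set x | (f x == i) || (f x == j)]]| <= 1].

Definition chi_harm n (g : graph n) (lam : nat) : nat :=
  #|[set f : {ffun 'I_n -> 'I_lam} | harmonious g f]|.

(* G is chi_harm-unique: every graph H with chi_harm(H) = chi_harm(G)
   (as polynomials, i.e. as functions of lambda) is isomorphic to G *)
Definition harm_unique n (g : graph n) : Prop :=
  forall m (h : graph m), simpleb h -> chi_harm g =1 chi_harm h -> iso g h.

Definition iso_classes n : {set {set graph n}} :=
  [set [set h | simpleb h && isob g h] | g in [set g : graph n | simpleb g]].

Definition unique_classes n : {set {set graph n}} :=
  [set C in iso_classes n | `[< forall g, g \in C -> harm_unique g >]].

(* If any two non-adjacent vertices of a simple graph G have a common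
   neighbour, a colouring of G is harmonious exactly when it is injective, so
   chi_harm(G) is the falling factorial of n.  The complete graph and the
   complete graph minus an edge are such graphs and are not isomorphic, so one
   of them is a chi_harm-mate of G.  Hence a chi_harm-unique graph has two
   vertices that are neither adjacent nor have a common neighbour, and at most
   n^2 (3/4)^(n-2) of all labelled graphs do.
   By the Cauchy-Frobenius lemma, n! times the number of isomorphism classes
   of such graphs is at most their number plus the number of pairs (s, G) with
   s a nontrivial permutation fixing G.  A permutation moving k vertices fixes
   at most a 2^(-k(n-3)/8) fraction of all graphs, so both terms are O(2^C(n,2)/n),
   whereas all isomorphism classes number at least 2^C(n,2)/n!. *)

From HB Require Import structures.
From mathcomp Require Import all_boot all_order all_algebra all_fingroup.
From mathcomp Require Import boolp zify.
Set Implicit Arguments. Unset Strict Implicit. Unset Printing Implicit Defensive.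

Lemma card_set_fibres (T U : finType) (f : T -> U) (A : {set T}) (P : pred U) :
  #|[set t in A | P (f t)]| = \sum_(u | P u) #|[set t in A | f t == u]|.
Proof.
rewrite -sum1_card (partition_big f P) => [|t]; last by rewrite inE => /andP[].
apply: eq_bigr => u Pu; rewrite -sum1_card; apply: eq_bigl => t; rewrite !inE.
by case: eqP => [-> | _]; rewrite ?Pu ?andbT ?andbF.
Qed.

Lemma leq_card_bigcup (I T : finType) (A : I -> {set T}) :
  #|\bigcup_i A i| <= \sum_i #|A i|.
Proof.
elim/big_rec2: _ => [|i B k _ IH]; first by rewrite cards0.
by apply: leq_trans (leq_card_setU _ _) _; rewrite leq_add2l.
Qed.

Lemma forall_in_setU1 (T : finType) (P : pred T) z (Z : {set T}) :
  [forall w in z |: Z, P w] = P z && [forall w in Z, P w].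
Proof.
apply/forall_inP/andP => [zZ_P | [Pz /forall_inP Z_P] w].
  by split; [|apply/forall_inP => w wZ]; apply: zZ_P; rewrite !inE ?eqxx ?wZ ?orbT.
by rewrite !inE => /orP[/eqP-> | /Z_P].
Qed.

Lemma leq_wexp2r a b e : a <= b -> a ^ e <= b ^ e.
Proof. by case: e => // e ab; rewrite leq_exp2r. Qed.

Definition simple_graphs n : {set graph n} := [set g | simpleb g].

Section GraphAction.
Variable n : nat.
Implicit Types (g h : graph n) (s : {perm 'I_n}).

Definition relabel g s : graph n := [set p | ((s^-1)%g p.1, (s^-1)%g p.2) \in g].

Lemma relabel1 : relabel^~ 1%g =1 id.
Proof. by move=> g; apply/setP => -[x y]; rewrite inE invg1 !perm1. Qed.

Lemma relabelM g : act_morph relabel g.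
Proof. by move=> s t; apply/setP => -[x y]; rewrite !inE invMg !permM. Qed.

Definition relabel_action := TotalAction relabel1 relabelM.

Lemma relabelE g s x y : ((s x, s y) \in relabel g s) = ((x, y) \in g).
Proof. by rewrite inE /= !permK. Qed.

Lemma relabelK g s : relabel (relabel g s) s^-1 = g.
Proof. by rewrite -relabelM mulgV relabel1. Qed.

Lemma simplebP g :
  reflect ((forall x y, ((x, y) \in g) = ((y, x) \in g)) /\ forall x, (x, x) \notin g)
          (simpleb g).
Proof.
apply: (iffP forallP) => [sg | [sym irr] x]; last first.
  by apply/forallP => y; rewrite sym eqxx irr.
split=> [x y | x]; first by have /forallP/(_ y)/andP[/eqP] := sg x.
by have /forallP/(_ x)/andP[] := sg x.
Qed.

Lemma simpleb_relabel g s : simpleb (relabel g s) = simpleb g.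
Proof.
have simple_relabel h t : simpleb h -> simpleb (relabel h t).
  case/simplebP=> sym irr; apply/simplebP; split=> [x y | x]; rewrite !inE /=.
    exact: sym.
  exact: irr.
apply/idP/idP; last exact: simple_relabel.
by move/(simple_relabel _ (s^-1)%g); rewrite relabelK.
Qed.

Lemma acts_simple : [acts [set: {perm 'I_n}], on simple_graphs n | relabel_action].
Proof. by apply/actsP => s _ g; rewrite !inE /= simpleb_relabel. Qed.

Lemma iso_class_orbit g : simpleb g ->
  [set h | simpleb h && isob g h] = orbit relabel_action [set: {perm 'I_n}] g.
Proof.
move=> sg; apply/setP => h; rewrite inE; apply/idP/imsetP => [|[s _ ->]].
  case/andP=> _ /existsP[s /forallP iso_s]; exists s; rewrite ?inE //.
  apply/setP => -[x y] /=; rewrite -[x](permKV s) -[y](permKV s) relabelE.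
  by have /forallP/(_ (s^-1 y)%g)/eqP := iso_s (s^-1 x)%g.
rewrite /= simpleb_relabel sg; apply/existsP; exists s.
by apply/forallP => x; apply/forallP => y; rewrite relabelE.
Qed.

Lemma iso_classesE :
  iso_classes n = orbit relabel_action [set: {perm 'I_n}] @: simple_graphs n.
Proof. by apply: eq_in_imset => g; rewrite inE; apply: iso_class_orbit. Qed.

Lemma card_iso m g (h : graph m) : iso g h -> #|g| = #|h|.
Proof.
case=> f [[f' fK f'K] iso_f].
pose f2 p := (f p.1, f p.2).
have f2_inj : injective f2 by move=> [a b] [c d] [/(can_inj fK) -> /(can_inj fK) ->].
rewrite -(card_imset g f2_inj); apply: eq_card => -[a b].
apply/imsetP/idP => [[[c d] gcd [-> ->]] | hab]; first by rewrite iso_f.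
by exists (f' a, f' b); rewrite /f2 /= ?f'K // -iso_f !f'K.
Qed.

End GraphAction.

(** * Graphs of diameter at most two *)

Section DistantPairs.
Variable n : nat.
Implicit Types (g : graph n) (x y : 'I_n).

Definition distant g x y :=
  [&& x != y, (x, y) \notin g & [forall z, ~~ (((x, z) \in g) && ((y, z) \in g))]].

Definition has_distant_pair g := [exists x, exists y, distant g x y].

Lemma distant_relabel g s x y : distant (relabel g s) (s x) (s y) = distant g x y.
Proof.
rewrite /distant (inj_eq perm_inj) relabelE; congr [&& _, _ & _].
apply/forallP/forallP => no_common z; last by rewrite -[z](permKV s) !relabelE.
by have := no_common (s z); rewrite !relabelE.
Qed.

Lemma has_distant_pair_relabel g s : has_distant_pair (relabel g s) = has_distant_pair g.
Proof.
apply/existsP/existsP => -[x /existsP[y d_xy]].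
  exists ((s^-1)%g x); apply/existsP; exists ((s^-1)%g y).
  by rewrite -(distant_relabel g s) !permKV.
by exists (s x); apply/existsP; exists (s y); rewrite distant_relabel.
Qed.

Lemma common_neighbour g x y : ~~ has_distant_pair g -> x != y -> (x, y) \notin g ->
  exists z, ((x, z) \in g) && ((y, z) \in g).
Proof.
move=> no_distant xy nxy; apply/existsP; apply: contraNT no_distant => no_common.
apply/existsP; exists x; apply/existsP; exists y.
by rewrite /distant xy nxy -negb_exists.
Qed.

Lemma injective_harmonious g k (f : {ffun 'I_n -> 'I_k}) :
  simpleb g -> injectiveb f -> harmonious g f.
Proof.
case/simplebP=> _ irr /injectiveP f_inj; apply/andP; split.
  apply/forallP => x; apply/forallP => y; apply/implyP => gxy.
  by rewrite (inj_eq f_inj); apply: contraNneq (irr x) => xy; rewrite {2}xy.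
apply/forallP => i; apply/forallP => j.
set X := [set x | (f x == i) || (f x == j)].
have card_X : #|X| <= 2.
  rewrite -(card_imset X f_inj); apply: leq_trans (_ : #|[set i; j]| <= 2).
    by apply/subset_leq_card/subsetP => _ /imsetP[x + ->]; rewrite !inE.
  by rewrite cards2; case: (i != j).
have edge_X e : e \in [set e in edges g | e \subset X] -> e = X.
  rewrite inE => /andP[/imsetP[[a b] gab ->] sub]; apply/eqP.
  have ab : a != b by apply: contraTneq gab => ->; apply: irr.
  by rewrite eqEcard sub cards2 ab.
by apply/card_le1_eqP => e1 e2 /edge_X -> /edge_X ->.
Qed.

Lemma harmonious_injective g k (f : {ffun 'I_n -> 'I_k}) :
  simpleb g -> ~~ has_distant_pair g -> harmonious g f -> injectiveb f.
Proof.
case/simplebP=> _ irr no_distant /andP[/forallP proper /forallP single_edge].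
apply/injectiveP => x y fxy; apply: contraTeq isT => xy.
have [gxy | ngxy] := boolP ((x, y) \in g).
  by have /forallP/(_ y)/implyP/(_ gxy) := proper x; rewrite fxy eqxx.
have [z /andP[gxz gyz]] := common_neighbour no_distant xy ngxy.
have /forallP/(_ (f z)) := single_edge (f x); apply: contraLR => _; rewrite -ltnNge.
have edge_in a b : (a, b) \in g -> [set a; b] \in edges g.
  by move=> gab; apply/imsetP; exists (a, b).
apply/card_gt1P; exists [set x; z], [set y; z]; rewrite !inE !edge_in //=.
split; try by apply/subsetP => w; rewrite !inE => /orP[]/eqP->; rewrite ?fxy eqxx ?orbT.
apply: contraNneq xy => /setP/(_ y); rewrite !inE eqxx /= => /orP[/eqP -> // | /eqP yz].
by move: gyz; rewrite yz (negbTE (irr z)).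
Qed.

Lemma chi_harm_diam2 g : simpleb g -> ~~ has_distant_pair g ->
  chi_harm g =1 fun k => #|[set f : {ffun 'I_n -> 'I_k} | injectiveb f]|.
Proof.
move=> sg no_distant k; apply: eq_card => f; rewrite !inE.
by apply/idP/idP; [apply: harmonious_injective | apply: injective_harmonious].
Qed.

End DistantPairs.

Section CompleteGraphs.
Variable n : nat.
Implicit Types (g : graph n) (x y z : 'I_n).

Definition complete : graph n := [set p | p.1 != p.2].

Definition complete_minus x y : graph n := complete :\ (x, y) :\ (y, x).

Lemma simpleb_complete : simpleb complete.
Proof. by apply/simplebP; split=> [x y | x]; rewrite !inE /= ?eqxx // eq_sym. Qed.

Lemma simpleb_complete_minus x y : simpleb (complete_minus x y).
Proof.
apply/simplebP; split=> [a b | a]; rewrite !inE ?eqxx ?andbF //=.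
by rewrite [b == a]eq_sym !xpair_eqE [(b == y) && _]andbC [(b == x) && _]andbC andbCA.
Qed.

Lemma complete_diam2 : ~~ has_distant_pair complete.
Proof. by apply/existsP => -[x /existsP[y /and3P[xy]]]; rewrite inE /= xy. Qed.

Lemma complete_minus_diam2 x y z : z != x -> z != y ->
  ~~ has_distant_pair (complete_minus x y).
Proof.
move=> zx zy; apply/existsP => -[a /existsP[b /and3P[ab nab /forallP/(_ z)]]].
have [az bz] : a != z /\ b != z.
  move: nab; rewrite !inE /= ab andbT negb_and !negbK !xpair_eqE.
  by case/orP => /andP[/eqP-> /eqP->]; rewrite ![_ == z]eq_sym zx zy.
by rewrite !inE /= az bz !xpair_eqE (negbTE zx) (negbTE zy) !andbF.
Qed.

Lemma card_complete_minus x y : x != y -> #|complete_minus x y| < #|complete|.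
Proof.
move=> xy; apply/proper_card/(sub_proper_trans (subsetDl _ _))/properD1.
by rewrite inE.
Qed.

Lemma diam2_not_harm_unique g : 2 < n -> simpleb g -> ~~ has_distant_pair g ->
  ~ harm_unique g.
Proof.
move=> n_gt2 sg g_diam2 g_unique.
have n_gt1 : 1 < n by apply: ltnW.
have n_gt0 : 0 < n by apply: ltnW.
pose x := Ordinal n_gt0; pose y := Ordinal n_gt1; pose z := Ordinal n_gt2.
have [xy zx zy] : [/\ x != y, z != x & z != y] by [].
have chi_g := chi_harm_diam2 sg g_diam2.
have iso_complete : iso g complete.
  apply: g_unique simpleb_complete _ => k.
  by rewrite chi_g (chi_harm_diam2 simpleb_complete complete_diam2).
have iso_complete_minus : iso g (complete_minus x y).
  apply: g_unique (simpleb_complete_minus x y) _ => k.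
  by rewrite chi_g (chi_harm_diam2 (simpleb_complete_minus x y) (complete_minus_diam2 zx zy)).
have := card_complete_minus xy.
by rewrite -(card_iso iso_complete) -(card_iso iso_complete_minus) ltnn.
Qed.

End CompleteGraphs.

(** * Graphs with a distant pair are rare *)

Section Toggle.
Variable n : nat.
Implicit Types (g : graph n) (u v : 'I_n).

Definition toggle u v g : graph n :=
  [set p | (p \in g) != ((p == (u, v)) || (p == (v, u)))].

Lemma toggleK u v : involutive (toggle u v).
Proof. by move=> g; apply/setP => p; rewrite !inE; case: (p \in g); case: (_ || _). Qed.

Lemma toggle_on u v g : ((u, v) \in toggle u v g) = ((u, v) \notin g).
Proof. by rewrite inE eqxx; case: (_ \in g). Qed.

Lemma toggle_off u v g p : p != (u, v) -> p != (v, u) -> (p \in toggle u v g) = (p \in g).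
Proof. by move=> /negbTE pu /negbTE pv; rewrite inE pu pv; case: (p \in g). Qed.

Lemma simpleb_toggle u v g : u != v -> simpleb g -> simpleb (toggle u v g).
Proof.
move=> uv /simplebP[sym irr]; apply/simplebP; split=> [a b | a]; rewrite !inE.
  by rewrite sym !xpair_eqE orbC [(b == v) && _]andbC [(b == u) && _]andbC.
rewrite (negbTE (irr a)) !xpair_eqE /=.
have a_uv : (a == u) && (a == v) = false.
  by apply: contraNF uv => /andP[/eqP<- /eqP<-].
by rewrite a_uv andbC a_uv.
Qed.

End Toggle.

Section DistantCount.
Variables (n : nat) (x y : 'I_n).
Hypothesis xy : x != y.
Implicit Types (g : graph n) (Z : {set 'I_n}).

Definition apart Z := [set g | [&& simpleb g, (x, y) \notin g &
  [forall z in Z, ~~ (((x, z) \in g) && ((y, z) \in g))]]].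

Definition link_pattern z g := ((x, z) \in g, (y, z) \in g).

Section AddVertex.
Variables (z : 'I_n) (Z : {set 'I_n}).
Hypotheses (zZ : z \notin Z) (zx : z != x) (zy : z != y).

Let xz : (x == z) = false. Proof. by rewrite eq_sym (negbTE zx). Qed.
Let yz : (y == z) = false. Proof. by rewrite eq_sym (negbTE zy). Qed.
Let yx : (y == x) = false. Proof. by rewrite eq_sym (negbTE xy). Qed.

Definition apart_class ab := [set g in apart Z | link_pattern z g == ab].

Lemma toggle_apart u g : u \in [set x; y] -> g \in apart Z -> toggle u z g \in apart Z.
Proof.
move=> u_xy; have uz : u != z by move: u_xy; rewrite !inE => /orP[]/eqP->; rewrite ?xz ?yz.
rewrite [g \in _]inE => /and3P[sg nxy /forall_inP no_common].
rewrite [_ \in apart Z]inE simpleb_toggle //=.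
rewrite toggle_off ?nxy ?xpair_eqE ?xz ?yz ?andbF //=.
apply/forall_inP => w wZ; have wz : (w == z) = false by apply: contraNF zZ => /eqP<-.
by rewrite !toggle_off ?no_common // xpair_eqE ?wz ?xz ?yz ?andbF.
Qed.

Lemma link_pattern_togglel g :
  link_pattern z (toggle x z g) = (~~ ((x, z) \in g), (y, z) \in g).
Proof.
by rewrite /link_pattern toggle_on toggle_off // xpair_eqE ?yx ?yz ?andbF.
Qed.

Lemma link_pattern_toggler g :
  link_pattern z (toggle y z g) = ((x, z) \in g, ~~ ((y, z) \in g)).
Proof. by rewrite /link_pattern toggle_on toggle_off // xpair_eqE ?(negbTE xy) ?xz ?andbF. Qed.

Lemma leq_card_apart_class_negl a b : #|apart_class (a, b)| <= #|apart_class (~~ a, b)|.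
Proof.
rewrite -(card_imset _ (inv_inj (toggleK x z))).
apply/subset_leq_card/subsetP => _ /imsetP[g + ->].
rewrite ![_ \in apart_class _]inE => /andP[gA].
by rewrite toggle_apart ?set21 // link_pattern_togglel /link_pattern => /eqP[-> ->] /[!eqxx].
Qed.

Lemma leq_card_apart_class_negr a b : #|apart_class (a, b)| <= #|apart_class (a, ~~ b)|.
Proof.
rewrite -(card_imset _ (inv_inj (toggleK y z))).
apply/subset_leq_card/subsetP => _ /imsetP[g + ->].
rewrite ![_ \in apart_class _]inE => /andP[gA].
by rewrite toggle_apart ?set22 // link_pattern_toggler /link_pattern => /eqP[-> ->] /[!eqxx].
Qed.

Lemma card_apart_class ab : #|apart_class ab| = #|apart_class (false, false)|.
Proof.
have negl a b : #|apart_class (a, b)| = #|apart_class (~~ a, b)|.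
  apply/eqP; rewrite eqn_leq leq_card_apart_class_negl.
  by rewrite -{2}[a]negbK leq_card_apart_class_negl.
have negr a b : #|apart_class (a, b)| = #|apart_class (a, ~~ b)|.
  apply/eqP; rewrite eqn_leq leq_card_apart_class_negr.
  by rewrite -{2}[b]negbK leq_card_apart_class_negr.
by case: ab => [[] []]; [rewrite negl negr | rewrite negl | rewrite negr |].
Qed.

(* Toggling the edge [xz] or [yz] shows that the four link patterns at [z] are
   equally frequent, and [apart (z |: Z)] excludes exactly one of them. *)
Lemma card_apart_setU1 : 4 * #|apart (z |: Z)| = 3 * #|apart Z|.
Proof.
have fibres (P : pred (bool * bool)) :
    #|[set g in apart Z | P (link_pattern z g)]| = #|P| * #|apart_class (false, false)|.
  by rewrite card_set_fibres (eq_bigr _ (fun ab _ => card_apart_class ab)) sum_nat_const.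
have -> : apart (z |: Z) = [set g in apart Z | predC1 (true, true) (link_pattern z g)].
  apply/setP => g; rewrite !inE forall_in_setU1 /= /link_pattern xpair_eqE !eqb_id.
  by rewrite -!andbA; do 2 congr andb; rewrite andbC.
have -> : #|apart Z| = #|[set g in apart Z | predT (link_pattern z g)]|.
  by apply: eq_card => g; rewrite inE andbT.
by rewrite !fibres (cardC1 (true, true)) card_prod card_bool mulnCA.
Qed.

End AddVertex.

Lemma card_apart_compl :
  4 ^ (n - 2) * #|apart (~: [set x; y])| = 3 ^ (n - 2) * #|apart set0|.
Proof.
suff card_apart k : forall Z, #|Z| = k -> Z \subset ~: [set x; y] ->
    4 ^ k * #|apart Z| = 3 ^ k * #|apart set0|.
  apply: card_apart (subxx _).
  have := cardsC [set x; y]; rewrite cards2 xy card_ord.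
  by move=> /(congr1 (subn^~ 2)); rewrite addKn.
elim: k => [|k IH] Z card_Z sub_Z; first by rewrite (cards0_eq card_Z).
have [z zZ] : exists z, z \in Z by apply/card_gt0P; rewrite card_Z.
have := subsetP sub_Z z zZ; rewrite !inE negb_or => /andP[zx zy].
have card_Z' : #|Z :\ z| = k by move: card_Z; rewrite (cardsD1 z) zZ => -[].
have sub_Z' : Z :\ z \subset ~: [set x; y] by apply: subset_trans sub_Z; apply: subD1set.
rewrite -(setD1K zZ) expnS mulnAC card_apart_setU1 ?setD11 //.
by rewrite mulnAC -mulnA IH // mulnA -expnS.
Qed.

Lemma card_distant_pair :
  4 ^ (n - 2) * #|[set g | simpleb g && distant g x y]|
    <= 3 ^ (n - 2) * #|simple_graphs n|.
Proof.
apply: leq_trans (_ : _ <= 4 ^ (n - 2) * #|apart (~: [set x; y])|) _.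
  rewrite leq_mul2l; apply/orP; right; apply/subset_leq_card/subsetP => g.
  rewrite !inE => /andP[-> /and3P[_ -> /forallP no_common]] /=.
  by apply/forall_inP => z _; apply: no_common.
rewrite card_apart_compl leq_mul2l; apply/orP; right.
by apply/subset_leq_card/subsetP => g; rewrite !inE => /andP[].
Qed.

End DistantCount.

Definition distant_graphs n : {set graph n} := [set g | simpleb g && has_distant_pair g].

Lemma card_distant_graphs n :
  4 ^ (n - 2) * #|distant_graphs n|
    <= n * n * 3 ^ (n - 2) * #|simple_graphs n|.
Proof.
have cover : distant_graphs n
    \subset \bigcup_(p : 'I_n * 'I_n) [set g | simpleb g && distant g p.1 p.2].
  apply/subsetP => g; rewrite inE => /andP[sg /existsP[x /existsP[y d_xy]]].
  by apply/bigcupP; exists (x, y); rewrite // inE sg.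
apply: leq_trans (leq_mul (leqnn _) (subset_leq_card cover)) _.
apply: leq_trans (leq_mul (leqnn _) (leq_card_bigcup _)) _.
set S := #|simple_graphs n|.
have -> : n * n * 3 ^ (n - 2) * S = \sum_(p : 'I_n * 'I_n) 3 ^ (n - 2) * S.
  by rewrite sum_nat_const card_prod card_ord mulnA.
rewrite big_distrr.
apply: leq_sum => -[x y] _ /=.
have [<- | xy] := eqVneq x y; last exact: card_distant_pair.
suff -> : [set g | simpleb g && distant g x x] = set0 by rewrite cards0 muln0.
by apply/setP => g; rewrite !inE /distant eqxx andbF.
Qed.

(** * Graphs fixed by a permutation *)

Section FixedGraphs.
Variables (n : nat) (s : {perm 'I_n}) (M : {set 'I_n}).
Hypothesis M_moved : forall x, x \in M -> s x \notin M.
Implicit Types (g : graph n) (Q : {set 'I_n * 'I_n}).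

Local Notation fixed := ('Fix_(simple_graphs n | relabel_action n)[s])%g.

Definition far_side := [set z | (z \notin M) && (s z \notin M)].

Definition cut_pairs := setX M far_side.

Definition sym_closure Q p := (p \in Q) || ((p.2, p.1) \in Q).

Definition flip_pairs (gQ : graph n * {set 'I_n * 'I_n}) : graph n :=
  [set p | (p \in gQ.1) != sym_closure gQ.2 p].

Lemma relabel_cut_pair a b :
  sym_closure cut_pairs (a, b) -> ~~ sym_closure cut_pairs (s a, s b).
Proof.
have out x y : x \in M -> y \in far_side -> (s x \notin M) && (s y \notin M).
  by move=> /M_moved ->; rewrite inE => /andP[].
rewrite /sym_closure !in_setX /= => cut_ab.
have /andP[/negbTE-> /negbTE->] : (s a \notin M) && (s b \notin M).
  by case/orP: cut_ab => /andP[/out out_xy /out_xy]; rewrite // andbC.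
done.
Qed.

Lemma cut_pairs_asym a b : (a, b) \in cut_pairs -> (b, a) \notin cut_pairs.
Proof. by rewrite !in_setX !inE => /andP[aM _]; rewrite aM !andbF. Qed.

Lemma fixedP g : g \in fixed -> simpleb g /\ forall a b, ((s a, s b) \in g) = ((a, b) \in g).
Proof.
rewrite inE => /andP[]; rewrite inE => sg /afix1P /= fix_g; split=> // a b.
by rewrite -{1}fix_g relabelE.
Qed.

(* At [p], a graph fixed by [s] takes the value it takes at the [s]-image of
   [p], which lies outside the symmetric closure of [cut_pairs]: this recovers
   [g] from its flip, and then the flipped pairs. *)
Lemma flip_pairs_inj : {in setX fixed (powerset cut_pairs) &, injective flip_pairs}.
Proof.
move=> [g1 Q1] [g2 Q2]; rewrite !in_setX !powersetE /=.
move=> /andP[/fixedP[_ fix1] sub1] /andP[/fixedP[_ fix2] sub2] /setP flip_eq.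
have diff p : ((p \in g1) != (p \in g2)) = (sym_closure Q1 p != sym_closure Q2 p).
  have := flip_eq p; rewrite !inE.
  by case: (p \in g1); case: (p \in g2); case: (sym_closure Q1 p); case: (sym_closure Q2 p).
have sym_cut Q p : Q \subset cut_pairs -> sym_closure Q p -> sym_closure cut_pairs p.
  by rewrite /sym_closure => /subsetP sQ /orP[] /sQ ->; rewrite ?orbT.
have in_cut p : sym_closure Q1 p != sym_closure Q2 p -> sym_closure cut_pairs p.
  case: (boolP (sym_closure Q1 p)) => [/(sym_cut _ _ sub1) // | _ /negPn].
  exact: sym_cut.
have g12 : g1 = g2.
  apply/setP => -[a b]; apply/eqP; apply: contraT => neq_ab.
  have cut_ab : sym_closure cut_pairs (a, b) by apply: in_cut; rewrite -diff.
  have cut_sab : sym_closure cut_pairs (s a, s b) by apply: in_cut; rewrite -diff fix1 fix2.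
  by rewrite (negbTE (relabel_cut_pair cut_ab)) in cut_sab.
have sym12 p : sym_closure Q1 p = sym_closure Q2 p.
  by apply/eqP/negbFE; rewrite -diff g12 eqxx.
congr (_, _); first exact: g12.
apply/setP => -[a b]; have [ab_cut | ab_ncut] := boolP ((a, b) \in cut_pairs).
  have rev_out Q : Q \subset cut_pairs -> ((b, a) \in Q) = false.
    by move=> /subsetP sQ; apply: contraNF (cut_pairs_asym ab_cut) => /sQ.
  by have := sym12 (a, b); rewrite /sym_closure /= !rev_out // !orbF.
by rewrite (contraNF (subsetP sub1 _) ab_ncut) (contraNF (subsetP sub2 _) ab_ncut).
Qed.

Lemma simpleb_flip_pairs g Q : simpleb g -> Q \subset cut_pairs -> simpleb (flip_pairs (g, Q)).
Proof.
move=> /simplebP[sym irr] /subsetP sQ; apply/simplebP; split=> [a b | a]; rewrite !inE /=.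
  by rewrite sym /sym_closure orbC.
have aQ : (a, a) \notin Q.
  by apply/negP => /sQ; rewrite in_setX !inE => /andP[aM /andP[]]; rewrite aM.
by rewrite (negbTE (irr a)) /sym_closure orbb (negbTE aQ).
Qed.

Lemma card_fixed_cut_pairs : #|fixed| * 2 ^ #|cut_pairs| <= #|simple_graphs n|.
Proof.
rewrite -card_powerset -cardsX -(card_in_imset flip_pairs_inj).
apply/subset_leq_card/subsetP => _ /imsetP[[g Q] + ->].
by rewrite in_setX powersetE /= => /andP[/fixedP[sg _] sQ]; rewrite inE simpleb_flip_pairs.
Qed.

Lemma card_far_side : n <= #|far_side| + 2 * #|M|.
Proof.
have near_side : ~: far_side = M :|: s @^-1: M.
  by apply/setP => z; rewrite !inE negb_and !negbK.
have := cardsC far_side; rewrite near_side card_ord => {1}<-.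
rewrite leq_add2l mul2n -addnn -{2}(card_preimset M (@perm_inj _ s)).
exact: leq_card_setU.
Qed.

End FixedGraphs.

Section MovedPoints.
Variable T : finType.
Implicit Types s : {perm T}.

Definition moved s := [set x | s x != x].

Lemma moved_gt0 s : s != 1%g -> 0 < #|moved s|.
Proof.
move=> s_nontriv; rewrite card_gt0; apply: contraNneq s_nontriv => no_moved.
apply/eqP/permP => x; rewrite perm1; apply/eqP.
by have /setP/(_ x) := no_moved; rewrite !inE => /negbFE.
Qed.

Lemma card_perm_moved (x0 : T) k :
  #|[set s | #|moved s| == k]| <= (#|T| * #|T|) ^ k.
Proof.
pose code s : {ffun 'I_k -> T * T} :=
  [ffun i : 'I_k => (nth x0 (enum (moved s)) i, s (nth x0 (enum (moved s)) i))].
suff code_inj : {in [set s | #|moved s| == k] &, injective code}.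
  rewrite -(card_in_imset code_inj); apply: leq_trans (max_card _) _.
  by rewrite card_ffun card_prod card_ord.
move=> s1 s2; rewrite !inE => /eqP card1 /eqP card2 code12.
have code_i i := congr1 (fun f : {ffun 'I_k -> T * T} => f i) code12.
have enum12 : enum (moved s1) = enum (moved s2).
  apply: (@eq_from_nth _ x0); first by rewrite -!cardE card1 card2.
  move=> i; rewrite -cardE card1 => ik.
  by have := code_i (Ordinal ik); rewrite !ffunE => -[].
apply/permP => x; have [x_moved | x_fixed] := boolP (x \in moved s1).
  have x_enum : x \in enum (moved s1) by rewrite mem_enum.
  have ik : index x (enum (moved s1)) < k by rewrite -card1 cardE index_mem.
  by have := code_i (Ordinal ik); rewrite !ffunE /= -enum12 nth_index // => -[].
have : x \notin moved s2 by rewrite -mem_enum -enum12 mem_enum.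
by move: x_fixed; rewrite !inE !negbK => /eqP-> /eqP->.
Qed.

(* Take [M] maximal with [M] and [s M] disjoint and [4 #|M| <= #|T|]: unless
   the size bound is nearly reached, [M], [s^-1 M] and [s M] cover the moved
   points. *)
Lemma exists_cut_set s : exists M : {set T},
  [/\ forall x, x \in M -> s x \notin M, 4 * #|M| <= #|T|
    & #|moved s| <= 3 * #|M| \/ #|T| < 4 * #|M| + 4].
Proof.
pose ok (M : {set T}) := [forall x in M, s x \notin M] && (4 * #|M| <= #|T|).
have ok0 : ok set0.
  by rewrite /ok cards0; apply/andP; split=> //; apply/forall_inP => x; rewrite inE.
have [M /andP[/forall_inP M_moved M_small] M_max] := arg_maxnP (fun M : {set T} => #|M|) ok0.
exists M; split=> //; have [|large] := ltnP #|T| (4 * #|M| + 4); [by right | left].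
have cover : moved s \subset M :|: s @^-1: M :|: (s^-1)%g @^-1: M.
  apply/subsetP => x x_moved; rewrite !inE; apply: contraT; rewrite !negb_or.
  case/andP=> /andP[xM sxM] s'xM; suff /M_max : ok (x |: M) by rewrite cardsU1 xM add1n /= ltnn.
  apply/andP; split; last by rewrite cardsU1 xM mulnDr muln1 addnC.
  apply/forall_inP => y; rewrite !inE negb_or => /orP[/eqP-> | yM].
    by rewrite sxM andbT; move: x_moved; rewrite inE.
  by rewrite M_moved // andbT; apply: contraNneq s'xM => <-; rewrite permK.
apply: leq_trans (subset_leq_card cover) _.
apply: leq_trans (leq_card_setU _ _) _; rewrite card_preimset; last exact: perm_inj.
apply: leq_trans (leq_add (leq_card_setU _ _) (leqnn _)) _.
by rewrite !card_preimset; try exact: perm_inj; lia.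
Qed.

End MovedPoints.

(* Either [#|moved s| <= 3 #|M|], or [#|M|] is about [n/4]; in both cases
   [#|far_side| >= n/2] bounds [#|M| * #|far_side|] below by
   [#|moved s| * (n - 3) / 8]. *)
Lemma card_fixed_moved n (s : {perm 'I_n}) :
  #|('Fix_(simple_graphs n | relabel_action n)[s])%g| * 2 ^ (#|moved s| * ((n - 3) %/ 8))
    <= #|simple_graphs n|.
Proof.
have [M [M_moved M_small M_large]] := exists_cut_set s.
apply: leq_trans (card_fixed_cut_pairs M_moved).
rewrite leq_mul2l leq_exp2l // cardsX; apply/orP; right.
have moved_le : #|moved s| <= n by rewrite -[n in _ <= n]card_ord max_card.
have := card_far_side s M; rewrite card_ord in M_small M_large.
move: #|moved s| #|M| #|far_side s M| moved_le M_small M_large => k m z.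
have := leq_divM (n - 3) 8; set d := (n - 3) %/ 8 => d_le k_le m_le [k_le3m | n_lt] z_ge.
  have : 3 * d <= z by lia.
  nia.
have : 2 * d <= m by lia.
have : n <= 2 * z by lia.
nia.
Qed.

(* At most [n^(2k)] permutations move [k] points, and each of them fixes at
   most a [n^(-4k)] fraction of the graphs. *)
Lemma sum_card_fixed_moved n k : n ^ 4 <= 2 ^ ((n - 3) %/ 8) -> 0 < k ->
  n ^ 2 * \sum_(s in [set s : {perm 'I_n} | #|moved s| == k])
            #|('Fix_(simple_graphs n | relabel_action n)[s])%g|
    <= #|simple_graphs n|.
Proof.
move=> n_small k_gt0; have [-> | n_gt0] := posnP n; first by rewrite mul0n.
set A := [set s | _]; set S := #|simple_graphs n|.
pose fixed (s : {perm 'I_n}) := #|('Fix_(simple_graphs n | relabel_action n)[s])%g|.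
have fixed_small s : s \in A -> n ^ (2 * k + 2 * k) * fixed s <= S.
  rewrite inE => /eqP moved_k; rewrite -mulnDl [_ * fixed s]mulnC.
  apply: leq_trans (card_fixed_moved s).
  by rewrite leq_mul2l moved_k (mulnC k) !expnM leq_exp2r // n_small orbT.
have card_A : #|A| <= n ^ (2 * k).
  by apply: leq_trans (card_perm_moved (Ordinal n_gt0) k) _; rewrite card_ord mulnn expnM.
have : n ^ (2 * k) * (n ^ (2 * k) * \sum_(s in A) fixed s) <= n ^ (2 * k) * S.
  rewrite mulnA -expnD big_distrr /=.
  apply: (@leq_trans (\sum_(s in A) S)); first exact: leq_sum.
  by rewrite sum_nat_const leq_mul2r card_A orbT.
rewrite leq_pmul2l ?expn_gt0 ?n_gt0 //; apply: leq_trans.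
by rewrite leq_mul2r leq_pexp2l ?orbT // -{1}(muln1 2) leq_pmul2l.
Qed.

Lemma sum_card_fixed_nontrivial n : n ^ 4 <= 2 ^ ((n - 3) %/ 8) ->
  n * \sum_(s : {perm 'I_n} | s != 1%g) #|('Fix_(simple_graphs n | relabel_action n)[s])%g|
    <= #|simple_graphs n|.
Proof.
case: n => [|n] n_small; first by rewrite mul0n.
pose moved_index (s : {perm 'I_n.+1}) : 'I_n.+1 := inord #|moved s|.-1.
have moved_le (s : {perm 'I_n.+1}) : #|moved s| <= n.+1.
  by apply: leq_trans (max_card _) _; rewrite card_ord.
rewrite (partition_big moved_index xpredT) //=.
have : n.+1 ^ 2 * \sum_(j < n.+1) \sum_(s in [set s | #|moved s| == j.+1])
          #|('Fix_(simple_graphs n.+1 | relabel_action n.+1)[s])%g|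
    <= n.+1 * #|simple_graphs n.+1|.
  rewrite big_distrr /=; apply: (@leq_trans (\sum_(j < n.+1) #|simple_graphs n.+1|)).
    by apply: leq_sum => j _; apply: sum_card_fixed_moved.
  by rewrite sum_nat_const card_ord.
rewrite expnS expn1 -mulnA leq_pmul2l // => classes_small; apply: leq_trans classes_small.
rewrite leq_mul2l; apply/orP; right; apply: leq_sum => j _.
apply: (sub_le_big leqnn (fun a b => leq_addr b a)) => s /andP[/moved_gt0 moved_pos /eqP<-].
by rewrite inE inordK prednK // prednK ?moved_le.
Qed.


Lemma quartic_step t : 9 <= t -> (8 * t + 18) ^ 4 <= 2 * (8 * t + 10) ^ 4.
Proof.
move=> t_ge9; rewrite -(leq_pmul2l (_ : 0 < 10 ^ 4)) //.
apply: leq_trans (_ : _ <= (11 * (8 * t + 10)) ^ 4) _.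
  by rewrite -expnMn leq_exp2r //; lia.
by rewrite expnMn mulnA leq_mul2r orbC.
Qed.

Lemma quartic_le_exp2 t : 40 <= t -> (8 * t + 10) ^ 4 <= 2 ^ t.
Proof.
elim: t => // t IH; rewrite leq_eqVlt => /predU1P[<- | t_ge40].
  by rewrite -[40]/(10 * 4) expnM; apply: leq_wexp2r.
have -> : 8 * t.+1 + 10 = 8 * t + 18 by lia.
rewrite (expnS 2 t); apply: leq_trans (quartic_step (leq_trans (isT : 9 <= 40) t_ge40)) _.
by rewrite leq_mul2l IH.
Qed.

(* [323 = 8 * 40 + 3] is where [quartic_le_exp2] starts to apply. *)
Lemma quartic_le_exp2_div8 n : 323 <= n -> n ^ 4 <= 2 ^ ((n - 3) %/ 8).
Proof.
move=> n_large; set t := (n - 3) %/ 8.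
have t_large : 40 <= t by rewrite /t (@leq_div2r 8 320); lia.
have := ltn_ceil (n - 3) (isT : 0 < 8); rewrite -/t => n_le.
by apply: leq_trans (quartic_le_exp2 t_large); rewrite leq_exp2r //; lia.
Qed.

Lemma exp2_div3_exp3_le_exp4 m : 2 ^ (m %/ 3) * 3 ^ m <= 4 ^ m.
Proof.
rewrite {2 3}(divn_eq m 3) !expnD !(mulnC _ 3) !expnM mulnA -expnMn.
by rewrite leq_mul // leq_wexp2r.
Qed.

Lemma cube_exp3_le_exp4 n : 323 <= n -> n ^ 3 * 3 ^ (n - 2) <= 4 ^ (n - 2).
Proof.
move=> n_large; apply: leq_trans (exp2_div3_exp3_le_exp4 (n - 2)).
rewrite leq_mul2r; apply/orP; right.
apply: (@leq_trans (n ^ 4)); first by rewrite leq_exp2l //; lia.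
apply: leq_trans (quartic_le_exp2_div8 n_large) _; rewrite leq_exp2l //.
apply: leq_trans (leq_div2r 8 (leq_sub2l n (isT : 2 <= 3))) _.
exact: leq_div2l.
Qed.

(** * Counting isomorphism classes *)

Lemma card_distant_graphs_small n : 323 <= n -> n * #|distant_graphs n| <= #|simple_graphs n|.
Proof.
move=> n_large; rewrite -(@leq_pmul2l (4 ^ (n - 2))) ?expn_gt0 // mulnCA.
apply: leq_trans (leq_mul (leqnn n) (card_distant_graphs n)) _.
have -> : n * (n * n * 3 ^ (n - 2) * #|simple_graphs n|)
    = n ^ 3 * 3 ^ (n - 2) * #|simple_graphs n| by rewrite (expnS n 2) (expnS n 1) expn1 !mulnA.
by rewrite leq_mul2r cube_exp3_le_exp4 ?orbT.
Qed.

Lemma acts_distant_graphs n :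
  [acts [set: {perm 'I_n}], on distant_graphs n | relabel_action n].
Proof. by apply/actsP => s _ g; rewrite !inE /= simpleb_relabel has_distant_pair_relabel. Qed.

Lemma unique_classes_sub_distant n : 2 < n ->
  unique_classes n \subset orbit (relabel_action n) [set: {perm 'I_n}] @: distant_graphs n.
Proof.
move=> n_gt2; apply/subsetP => C; rewrite inE => /andP[/imsetP[g sg C_def] /asboolP C_unique].
rewrite inE in sg.
have g_unique : harm_unique g.
  apply: C_unique; rewrite C_def inE sg /=; apply/existsP; exists 1%g.
  by apply/forallP => x; apply/forallP => y; rewrite !perm1.
have g_distant : has_distant_pair g.
  by apply: contraT => /(diam2_not_harm_unique n_gt2 sg)/(_ g_unique).
by rewrite C_def iso_class_orbit // imset_f // inE sg.
Qed.

Lemma card_distant_orbits_small n : 323 <= n ->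
  n * #|orbit (relabel_action n) [set: {perm 'I_n}] @: distant_graphs n|
    <= 2 * #|iso_classes n|.
Proof.
move=> n_large.
set G := [set: {perm 'I_n}]; set act := relabel_action n.
set S := simple_graphs n; set D := distant_graphs n.
have G_gt0 : 0 < #|G| by apply/card_gt0P; exists 1%g; rewrite inE.
have sum_D : \sum_(s in G) #|('Fix_(D | act)[s])%g|
    <= #|D| + \sum_(s | s != 1%g) #|('Fix_(S | act)[s])%g|.
  rewrite (bigD1 1%g) ?inE //=; apply: leq_add; first exact/subset_leq_card/subsetIl.
  rewrite (eq_bigl (fun s => s != 1%g)) => [|s]; last by rewrite inE.
  apply: leq_sum => s _; apply/subset_leq_card/setSI.
  by apply/subsetP => g; rewrite !inE => /andP[].
have sum_S : #|S| <= \sum_(s in G) #|('Fix_(S | act)[s])%g|.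
  rewrite (bigD1 1%g) ?inE //=; apply: leq_trans (leq_addr _ _).
  apply/subset_leq_card/subsetP => g gS; rewrite inE gS; apply/afix1P; exact: relabel1.
have burnside_S := Frobenius_Cauchy (acts_simple n); rewrite -iso_classesE in burnside_S.
rewrite -(leq_pmul2r G_gt0) -mulnA -(Frobenius_Cauchy (acts_distant_graphs n)).
rewrite -mulnA -burnside_S; apply: leq_trans (leq_mul (leqnn n) sum_D) _.
rewrite mulnDr; apply: (@leq_trans (#|S| + #|S|)).
  apply: leq_add; first exact: card_distant_graphs_small.
  exact: sum_card_fixed_nontrivial (quartic_le_exp2_div8 n_large).
by rewrite addnn -mul2n leq_mul2l sum_S orbT.
Qed.

Lemma unique_classes_small n : 323 <= n ->
  n.+1 * #|unique_classes n| <= 3 * #|iso_classes n|.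
Proof.
move=> n_large; rewrite mulSn (mulSn 2) leq_add //.
  by apply/subset_leq_card/subsetP => C; rewrite inE => /andP[].
apply: leq_trans (card_distant_orbits_small n_large).
rewrite leq_mul2l subset_leq_card ?orbT // unique_classes_sub_distant //.
by apply: (leq_trans _ n_large).
Qed.


From mathcomp Require Import all_classical all_reals all_analysis.
Import GRing.Theory Num.Theory numFieldNormedType.Exports.
Unset Implicit Arguments.
Local Open Scope classical_set_scope.
Local Open Scope ring_scope.

Lemma nat_ratio_cvg0 (R : realType) (a b : nat -> nat) (c N : nat) :
  (forall n, (N <= n)%N -> (n.+1 * a n <= c * b n)%N) ->
  (fun n => (a n)%:R / (b n)%:R : R) @ \oo --> (0 : R).
Proof.
move=> ab_bound.
apply: (@squeeze_cvgr _ _ _ _ (fun=> 0) (fun n => c%:R * harmonic n)); last 2 first.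
- exact: cvg_cst.
- by rewrite -(mulr0 c%:R); apply: cvgMl_tmp; apply: cvg_harmonic.
near=> n; rewrite divr_ge0 //=.
have n_large : (N <= n)%N by near: n; apply: nbhs_infty_ge.
have [-> | b_pos] := eqVneq (b n) 0%N; first by rewrite invr0 mulr0 mulr_ge0.
rewrite ler_pdivrMr ?ltr0n ?lt0n // mulrAC ler_pdivlMr ?ltr0n //.
by rewrite -!natrM ler_nat mulnC ab_bound.
Unshelve. all: by end_near.
Qed.

Theorem theorem4 (R : realType) :
  (fun n : nat => (#|unique_classes n|%:R / #|iso_classes n|%:R : R)) @ \oo --> (0 : R).
Proof. exact: nat_ratio_cvg0 unique_classes_small. Qed.
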